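(* Let $L_1=\langle\mathbf{A}_1,D_1\rangle$ and $L_2=\langle\mathbf{A}_2,D_2\rangle$ be two matrix logics over the same propositional signature such that $\mathbf{A}_2$ is a subalgebra of $\mathbf{A}_1$ and $D_2=D_1\cap A_2$. Suppose there is a formula $\circ'(p)$ depending on a single propositional variable $p$ such that, for every valuation $\vartheta$ over $L_1$ and every formula $\alpha$, $\vartheta(\circ'\alpha)\in D_1$ iff $\vartheta(\alpha)\in A_2$. Then for every set of formulas $\Gamma$ and formula $\alpha$: $\circ'(Var(\Gamma\cup\{\alpha\})),\Gamma\vdash_{L_1}\alpha$ iff $\Gamma\vdash_{L_2}\alpha$, where $\circ'(X)=\{\circ'(p): p\in X\}$ for a set $X$ of propositional variables.
   Context: A matrix logic $\langle\mathbf{A},D\rangle$ consists of an algebra $\mathbf{A}$ of the signature and a set $D\subseteq A$ of designated values; a valuation is a homomorphism from the formula algebra into $\mathbf{A}$, and $\Gamma\vdash\alpha$ iff every valuation $\vartheta$ with $\vartheta[\Gamma]\subseteq D$ has $\vartheta(\alpha)\in D$. $Var(\Delta)$ is the set of propositional variables occurring in the formulas of $\Delta$; $\circ'\alpha$ denotes the result of substituting $\alpha$ for $p$ in $\circ'(p)$. *)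

From mathcomp Require Import all_boot.
Set Implicit Arguments. Unset Strict Implicit. Unset Printing Implicit Defensive.

Record signature := Signature { sym : Type; arity : sym -> nat }.

Inductive formula (S : signature) : Type :=
| Var : nat -> formula S
| App : forall c : sym S, ('I_(arity c) -> formula S) -> formula S.
Arguments Var {S} _.
Arguments App {S} _ _.

Record algebra (S : signature) := Algebra {
  carrier :> Type;
  op : forall c : sym S, ('I_(arity c) -> carrier) -> carrier }.
Arguments op {S} _ _ _.

(* Valuations: homomorphisms from the formula algebra, i.e. the unique
   homomorphic extension of an assignment of the variables. *)
Fixpoint eval (S : signature) (A : algebra S) (v : nat -> A) (f : formula S) : A :=
  match f with
  | Var n => v n
  | App c args => op A c (fun i => eval v (args i))
  end.

Record matrix (S : signature) := Matrix { alg : algebra S; designated : alg -> Prop }.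
Arguments alg {S} _.
Arguments designated {S} _ _.

Definition entails (S : signature) (L : matrix S) (Gamma : formula S -> Prop)
  (a : formula S) : Prop :=
  forall v : nat -> alg L,
    (forall g, Gamma g -> designated L (eval v g)) -> designated L (eval v a).

Definition closed_sub (S : signature) (A : algebra S) (P : A -> Prop) : Prop :=
  forall c (xs : 'I_(arity c) -> A), (forall i, P (xs i)) -> P (op A c xs).

Definition subalgebra (S : signature) (A : algebra S) (P : A -> Prop)
  (HP : closed_sub P) : algebra S :=
  @Algebra S {x : A | P x}
    (fun c xs => exist P (op A c (fun i => proj1_sig (xs i)))
                   (HP c _ (fun i => proj2_sig (xs i)))).

(* The matrix <A2, D1 ∩ A2> with A2 the subalgebra with universe P. *)
Definition submatrix (S : signature) (L : matrix S) (P : alg L -> Prop)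
  (HP : closed_sub P) : matrix S :=
  @Matrix S (subalgebra HP) (fun x => designated L (proj1_sig x)).

Fixpoint occurs (S : signature) (q : nat) (f : formula S) : Prop :=
  match f with
  | Var r => q = r
  | App c args => exists i, occurs q (args i)
  end.

Fixpoint subst1 (S : signature) (p : nat) (b : formula S) (f : formula S) : formula S :=
  match f with
  | Var r => if r == p then b else Var r
  | App c args => App c (fun i => subst1 p b (args i))
  end.

From mathcomp Require Import all_boot.
From Stdlib Require Import FunctionalExtensionality ClassicalEpsilon.
Set Implicit Arguments. Unset Strict Implicit.

(* A valuation into A2 is a valuation into A1 taking values in A2; conversely
   a valuation into A1 that makes every circ'(q), q a variable of the inference,
   designated sends those variables into A2, and on them it can be replaced by a
   valuation into A2 without changing the value of any formula involved. *)

Section Evaluation.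

Variables (S : signature) (A : algebra S).

Lemma eval_ext_occurs (v w : nat -> A) (f : formula S) :
  (forall q, occurs q f -> v q = w q) -> eval v f = eval w f.
Proof.
elim: f => [r|c args IH] /= vw; first exact: vw.
congr (op A c); apply: functional_extensionality => i.
by apply: IH => q qi; apply: vw; exists i.
Qed.

Variables (P : A -> Prop) (HP : closed_sub P).

Lemma eval_closed_sub (v : nat -> A) (f : formula S) :
  (forall q, occurs q f -> P (v q)) -> P (eval v f).
Proof.
elim: f => [r|c args IH] /= vP; first exact: vP.
by apply: HP => i; apply: IH => q qi; apply: vP; exists i.
Qed.

Lemma val_eval_subalgebra (v : nat -> subalgebra HP) (f : formula S) :
  proj1_sig (eval v f) = eval (fun q => proj1_sig (v q)) f.
Proof.
elim: f => [r|c args IH] //=.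
by congr (op A c); apply: functional_extensionality => i.
Qed.

Lemma exists_subalgebra_valuation (v : nat -> A) (x0 : subalgebra HP) :
  exists w : nat -> subalgebra HP, forall q, P (v q) -> proj1_sig (w q) = v q.
Proof.
exists (fun q => match excluded_middle_informative (P (v q)) with
                 | left vqP => exist P (v q) vqP
                 | right _ => x0 end).
by move=> q vqP; case: excluded_middle_informative.
Qed.

End Evaluation.

Section RelativeEntailment.

Variables (S : signature) (L1 : matrix S) (A2 : alg L1 -> Prop)
  (HA2 : closed_sub A2) (p : nat) (circ : formula S).

Hypothesis circ_designated : forall (v : nat -> alg L1) (a : formula S),
  designated L1 (eval v (subst1 p a circ)) <-> A2 (eval v a).

Definition inference_vars (Gamma : formula S -> Prop) (a : formula S) (q : nat) :=
  occurs q a \/ exists g, Gamma g /\ occurs q g.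

Definition circ_premises (X : nat -> Prop) (g : formula S) :=
  exists q, X q /\ g = subst1 p (Var q) circ.

Lemma entails_submatrix_of_circ (Gamma : formula S -> Prop) (a : formula S) :
  entails L1 (fun g => circ_premises (inference_vars Gamma a) g \/ Gamma g) a ->
  entails (submatrix HA2) Gamma a.
Proof.
move=> ent1 v GammaD /=; rewrite val_eval_subalgebra.
apply: ent1 => g [[q [_ ->]] | Gamma_g].
- by apply/(circ_designated _ (Var q)); exact: proj2_sig (v q).
- by rewrite -val_eval_subalgebra; exact: GammaD.
Qed.

Lemma entails_circ_of_submatrix (Gamma : formula S -> Prop) (a : formula S) :
  entails (submatrix HA2) Gamma a ->
  entails L1 (fun g => circ_premises (inference_vars Gamma a) g \/ Gamma g) a.
Proof.
move=> ent2 v premD.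
have varsA2 q : inference_vars Gamma a q -> A2 (v q).
  by move=> qvar; apply/(circ_designated _ (Var q)); apply: premD; left; exists q.
have aA2 : A2 (eval v a).
  by apply: eval_closed_sub => // q qa; apply: varsA2; left.
have [w wv] := exists_subalgebra_valuation (HP:=HA2) v (exist A2 _ aA2).
have eval_w f : (forall q, occurs q f -> inference_vars Gamma a q) ->
    eval v f = proj1_sig (eval w f).
  move=> fvars; rewrite val_eval_subalgebra; apply: eval_ext_occurs => q qf.
  by rewrite wv //; apply: varsA2; apply: fvars.
rewrite eval_w; last by move=> q qa; left.
apply: ent2 => g Gamma_g /=.
rewrite -eval_w; first by apply: premD; right.
by move=> q qg; right; exists g.
Qed.

End RelativeEntailment.

Theorem theorem19 (S : signature) (L1 : matrix S) (A2 : alg L1 -> Prop)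
  (HA2 : closed_sub A2) (p : nat) (circ : formula S)
  (Hcirc_var : forall q, occurs q circ -> q = p)
  (Hcirc : forall (v : nat -> alg L1) (a : formula S),
      designated L1 (eval v (subst1 p a circ)) <-> A2 (eval v a)) :
  forall (Gamma : formula S -> Prop) (a : formula S),
    entails L1
      (fun g => (exists q, (occurs q a \/ exists g', Gamma g' /\ occurs q g')
                           /\ g = subst1 p (Var q) circ)
                \/ Gamma g) a
    <-> entails (submatrix HA2) Gamma a.
Proof.
(* Hcirc already quantifies over all formulas. *)
move=> Gamma a; split.
- exact: entails_submatrix_of_circ.
- exact: entails_circ_of_submatrix.
Qed.
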